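(* Let $\{S(t)\}_{t\ge0}$ be a dissipative semigroup on a complete metric space $(X,d)$ and let $\mathcal{B}_0$ be a positively invariant bounded absorbing set. Assume there exist a constant $T>0$, a constant $\eta\in[0,1)$, a function $g:(\mathbb{R}^+)^m\to\mathbb{R}^+$, a function $\phi:X\times X\to\mathbb{R}^+$ and pseudometrics $\varrho_1,\dots,\varrho_m$ on $\mathcal{B}_0$ such that: (i) $g$ is non-decreasing in each variable, $g(0,\dots,0)=0$, and $g$ is continuous at $(0,\dots,0)$; (ii) for every sequence $\{y_n\}\subseteq\mathcal{B}_0$ there is a subsequence $\{y_{n_k}\}$ with $\lim_{k\to\infty}\lim_{l\to\infty}\phi(y_{n_k},y_{n_l})=0$; (iii) each $\varrho_i$ is precompact on $\mathcal{B}_0$, i.e. every sequence in $\mathcal{B}_0$ has a subsequence which is Cauchy with respect to $\varrho_i$; (iv) for all $y_1,y_2\in\mathcal{B}_0$, $$d(S(T)y_1,S(T)y_2)\le\eta\, d(y_1,y_2)+g\big(\varrho_1(y_1,y_2),\dots,\varrho_m(y_1,y_2)\big)+\phi(y_1,y_2).$$ Then $(X,\{S(t)\}_{t\ge0})$ is exponentially decaying with respect to the noncompactness measure, and for every bounded $B\subseteq X$, $$\alpha(S(t)B)\le2\eta^{\frac{t-t_*(B)-T}{T}}\alpha(\mathcal{B}_0)\quad\forall t\ge t_*(B)+T,$$ where $t_*(B)$ satisfies $S(t)B\subseteq\mathcal{B}_0$ for all $t\ge t_*(B)$.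
   Context: A semigroup consists of continuous maps $S(t):X\to X$ with $S(0)=I$, $S(t+s)=S(t)S(s)$; it is dissipative if it has a bounded absorbing set (a closed set $\mathcal{B}$ such that every bounded $B$ satisfies $S(t)B\subseteq\mathcal{B}$ for all large $t$); positively invariant means $S(t)\mathcal{B}_0\subseteq\mathcal{B}_0$ for $t\ge0$. $\alpha$ is the Kuratowski measure of noncompactness, $\alpha(B)=\inf\{\delta>0:B\text{ has a finite cover by sets of diameter}<\delta\}$. The system is exponentially decaying with respect to the noncompactness measure if it is dissipative and there are $t_0>0$ and constants $C,\beta>0$ with $\alpha(S(t)\mathcal{B}_0)\le Ce^{-\beta t}$ for all $t\ge t_0$, for a positively invariant bounded absorbing set $\mathcal{B}_0$. *)

From Stdlib Require Import Reals Lra.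
From Coquelicot Require Import Coquelicot.
Open Scope R_scope.

Section Defs.
Context {X : Type} (d : X -> X -> R).

Definition is_metric : Prop :=
  (forall x y, 0 <= d x y) /\ (forall x y, d x y = 0 <-> x = y) /\
  (forall x y, d x y = d y x) /\ (forall x y z, d x z <= d x y + d y z).

Definition cauchy_seq (u : nat -> X) : Prop :=
  forall eps, 0 < eps -> exists N, forall n p, (N <= n)%nat -> (N <= p)%nat -> d (u n) (u p) < eps.

Definition converges_to (u : nat -> X) (x : X) : Prop :=
  forall eps, 0 < eps -> exists N, forall n, (N <= n)%nat -> d (u n) x < eps.

Definition complete_metric : Prop :=
  forall u, cauchy_seq u -> exists x, converges_to u x.

Definition continuous_map (f : X -> X) : Prop :=
  forall x eps, 0 < eps -> exists delta, 0 < delta /\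
    forall y, d x y < delta -> d (f x) (f y) < eps.

Definition closed_set (A : X -> Prop) : Prop :=
  forall u x, (forall n, A (u n)) -> converges_to u x -> A x.

Definition bounded_set (A : X -> Prop) : Prop :=
  exists x0 r, forall x, A x -> d x0 x <= r.

Definition subset (A B : X -> Prop) : Prop := forall x, A x -> B x.

Definition image (f : X -> X) (A : X -> Prop) : X -> Prop :=
  fun y => exists x, A x /\ y = f x.

Definition is_semigroup (S : R -> X -> X) : Prop :=
  (forall t, 0 <= t -> continuous_map (S t)) /\
  (forall x, S 0 x = x) /\
  (forall t s x, 0 <= t -> 0 <= s -> S (t + s) x = S t (S s x)).

Definition absorbing (S : R -> X -> X) (B0 : X -> Prop) : Prop :=
  closed_set B0 /\
  forall B, bounded_set B -> exists t0, 0 <= t0 /\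
    forall t, t0 <= t -> subset (image (S t) B) B0.

Definition dissipative (S : R -> X -> X) : Prop :=
  exists B0, bounded_set B0 /\ absorbing S B0.

Definition pos_invariant (S : R -> X -> X) (B0 : X -> Prop) : Prop :=
  forall t, 0 <= t -> subset (image (S t) B0) B0.

(* diameter (sup of distances; -oo for the empty set) *)
Definition diam (A : X -> Prop) : Rbar :=
  Lub_Rbar (fun r => exists x y, A x /\ A y /\ r = d x y).

Definition kuratowski (B : X -> Prop) : Rbar :=
  Glb_Rbar (fun delta => 0 < delta /\
    exists (n : nat) (F : nat -> X -> Prop),
      (forall i, (i < n)%nat -> Rbar_lt (diam (F i)) delta) /\
      (forall x, B x -> exists i, (i < n)%nat /\ F i x)).

Definition exp_decaying (S : R -> X -> X) (B0 : X -> Prop) : Prop :=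
  dissipative S /\ pos_invariant S B0 /\ bounded_set B0 /\ absorbing S B0 /\
  exists t0 C beta, 0 < t0 /\ 0 < C /\ 0 < beta /\
    forall t, t0 <= t -> Rbar_le (kuratowski (image (S t) B0)) (C * exp (- beta * t)).

Definition pseudometric_on (A : X -> Prop) (rho : X -> X -> R) : Prop :=
  (forall x y, A x -> A y -> 0 <= rho x y) /\
  (forall x, A x -> rho x x = 0) /\
  (forall x y, A x -> A y -> rho x y = rho y x) /\
  (forall x y z, A x -> A y -> A z -> rho x z <= rho x y + rho y z).

Definition strictly_incr (nu : nat -> nat) : Prop := forall n, (nu n < nu (S n))%nat.

End Defs.

(* real power a^x for a >= 0, with the convention 0^0 = 1 and 0^x = 0 for x <> 0 *)
Definition rpow (a x : R) : R :=
  if Rlt_dec 0 a then Rpower a x else if Req_EM_T x 0 then 1 else 0.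

(** Say that a set K has close subsequences at scale r if every sequence in K has a
    subsequence z with d(z_k, z_l) < r for all large k and then all large l.  A cover by
    finitely many sets of diameter < a gives scale a (pigeonhole), and scale r gives
    finite covers by sets of diameter < delta for every delta > 2r (balls of radius
    slightly above r around a maximal separated family, which must be finite); this is
    where the factor 2 comes from.  If K is contained in B0, pass to a subsequence along
    which every rho_i is Cauchy and phi vanishes in the iterated limit: then (iv) turns
    scale r for K into scale eta r + eps for S(T)K.  Iterating n >= (t - t* - T)/T times
    from S(t - nT)B, a subset of B0, gives alpha(S(t)B) <= 2 eta^n alpha(B0). *)

From Stdlib Require Import Reals Lra Lia List Classical IndefiniteDescription.
From Coquelicot Require Import Coquelicot.
Open Scope R_scope.

Lemma strictly_incr_lt (mu : nat -> nat) :
  strictly_incr mu -> forall a b, (a < b)%nat -> (mu a < mu b)%nat.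
Proof.
  intros Hmu a b Hab. induction Hab as [|b _ IH].
  - apply Hmu.
  - specialize (Hmu b). lia.
Qed.

Lemma strictly_incr_ge (mu : nat -> nat) : strictly_incr mu -> forall n, (n <= mu n)%nat.
Proof.
  intros Hmu n. induction n as [|n IH]; [lia|]. specialize (Hmu n). lia.
Qed.

Lemma strictly_incr_comp (mu nu : nat -> nat) :
  strictly_incr mu -> strictly_incr nu -> strictly_incr (fun k => mu (nu k)).
Proof. intros Hmu Hnu n. apply strictly_incr_lt; auto. Qed.

Lemma infinitely_often_subseq (P : nat -> Prop) :
  (forall N, exists k, (N <= k)%nat /\ P k) ->
  exists mu, strictly_incr mu /\ forall k, P (mu k).
Proof.
  intros HP. destruct (functional_choice _ HP) as [f Hf].
  exists (nat_rect (fun _ => nat) (f O) (fun _ k => f (S k))). split.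
  - intros n. cbn. destruct (Hf (S (nat_rect (fun _ => nat) (f O) (fun _ k => f (S k)) n))).
    lia.
  - intros [|k]; apply Hf.
Qed.

Lemma eventually_forall_lt (P : nat -> nat -> Prop) (m : nat) :
  (forall i, (i < m)%nat -> exists N, forall k, (N <= k)%nat -> P i k) ->
  exists N, forall i, (i < m)%nat -> forall k, (N <= k)%nat -> P i k.
Proof.
  induction m as [|m IH]; intros HP.
  - exists O. intros; lia.
  - destruct IH as [N1 H1]; [intros i Hi; apply HP; lia|].
    destruct (HP m (Nat.lt_succ_diag_r m)) as [N2 H2].
    exists (Nat.max N1 N2). intros i Hi k Hk.
    destruct (Nat.eq_dec i m) as [->|Hne]; [apply H2 | apply H1]; lia.
Qed.

Lemma pigeonhole_subseq (n : nat) (c : nat -> nat) :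
  (forall k, (c k < n)%nat) ->
  exists i mu, (i < n)%nat /\ strictly_incr mu /\ forall k, c (mu k) = i.
Proof.
  intros Hc.
  assert (Hinf : exists i, (i < n)%nat /\ forall N, exists k, (N <= k)%nat /\ c k = i).
  { apply NNPP; intro Hfin.
    assert (Hev : forall i, (i < n)%nat -> exists N, forall k, (N <= k)%nat -> c k <> i).
    { intros i Hi. apply NNPP; intro Hno. apply Hfin. exists i. split; [exact Hi|].
      intro N. apply NNPP; intro Hk. apply Hno. exists N. intros k HNk Hck.
      apply Hk. exists k; auto. }
    destruct (eventually_forall_lt _ _ Hev) as [N HN].
    exact (HN (c N) (Hc N) N (le_n N) eq_refl). }
  destruct Hinf as [i [Hi Hinf]].
  destruct (infinitely_often_subseq _ Hinf) as [mu [Hmu Hmuc]].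
  exists i, mu. auto.
Qed.

Definition eventually2 (P : nat -> nat -> Prop) : Prop :=
  exists N, forall k, (N <= k)%nat -> exists M, forall l, (M <= l)%nat -> P k l.

Lemma eventually2_impl (P Q : nat -> nat -> Prop) :
  (forall k l, P k l -> Q k l) -> eventually2 P -> eventually2 Q.
Proof.
  intros HPQ [N HN]. exists N. intros k Hk. destruct (HN k Hk) as [M HM].
  exists M. intros l Hl. apply HPQ, HM, Hl.
Qed.

Lemma eventually2_and (P Q : nat -> nat -> Prop) :
  eventually2 P -> eventually2 Q -> eventually2 (fun k l => P k l /\ Q k l).
Proof.
  intros [N1 H1] [N2 H2]. exists (Nat.max N1 N2). intros k Hk.
  destruct (H1 k ltac:(lia)) as [M1 HM1]. destruct (H2 k ltac:(lia)) as [M2 HM2].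
  exists (Nat.max M1 M2). intros l Hl. split; [apply HM1 | apply HM2]; lia.
Qed.

Lemma eventually2_subseq (P : nat -> nat -> Prop) (mu : nat -> nat) :
  strictly_incr mu -> eventually2 P -> eventually2 (fun k l => P (mu k) (mu l)).
Proof.
  intros Hmu [N HN]. exists N. intros k Hk.
  destruct (HN (mu k)) as [M HM]; [pose proof (strictly_incr_ge mu Hmu k); lia|].
  exists M. intros l Hl. apply HM. pose proof (strictly_incr_ge mu Hmu l). lia.
Qed.

Lemma eventually2_of_iterated_lim (u : nat -> nat -> R) (L : nat -> R) (e : R) :
  (forall k, is_lim_seq (u k) (L k)) -> is_lim_seq L 0 -> 0 < e ->
  eventually2 (fun k l => u k l < e).
Proof.
  intros Hu HL He. apply is_lim_seq_spec in HL.
  destruct (HL (mkposreal (e / 2) ltac:(lra))) as [N HN]. exists N. intros k Hk.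
  specialize (Hu k). apply is_lim_seq_spec in Hu.
  destruct (Hu (mkposreal (e / 2) ltac:(lra))) as [M HM]. exists M. intros l Hl.
  specialize (HN k Hk). specialize (HM l Hl). simpl in HN, HM.
  apply Rabs_def2 in HN. apply Rabs_def2 in HM. lra.
Qed.

Section Subsequences.
Context {X : Type}.

Lemma cauchy_seq_subseq (f : X -> X -> R) (z : nat -> X) (mu : nat -> nat) :
  cauchy_seq f z -> strictly_incr mu -> cauchy_seq f (fun k => z (mu k)).
Proof.
  intros Hz Hmu e He. destruct (Hz e He) as [N HN]. exists N. intros n p Hn Hp.
  apply HN; [pose proof (strictly_incr_ge mu Hmu n) | pose proof (strictly_incr_ge mu Hmu p)];
    lia.
Qed.

Lemma common_cauchy_subseq (A : X -> Prop) (f : nat -> X -> X -> R) (m : nat) :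
  (forall i, (i < m)%nat -> forall y : nat -> X, (forall n, A (y n)) ->
     exists nu, strictly_incr nu /\ cauchy_seq (f i) (fun k => y (nu k))) ->
  forall y : nat -> X, (forall n, A (y n)) ->
    exists mu, strictly_incr mu /\
      forall i, (i < m)%nat -> cauchy_seq (f i) (fun k => y (mu k)).
Proof.
  induction m as [|m IH]; intros Hf y Hy.
  - exists (fun k => k). split; [intro n; lia | intros; lia].
  - destruct (IH (fun i Hi => Hf i ltac:(lia)) y Hy) as [mu [Hmu Hcauchy]].
    destruct (Hf m (Nat.lt_succ_diag_r m) (fun k => y (mu k)) (fun n => Hy _))
      as [nu [Hnu Hm]].
    exists (fun k => mu (nu k)). split; [apply strictly_incr_comp; assumption|].
    intros i Hi. destruct (Nat.eq_dec i m) as [->|Hne]; [exact Hm|].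
    apply (cauchy_seq_subseq (f i) (fun k => y (mu k))); [apply Hcauchy; lia | exact Hnu].
Qed.

Lemma separated_seq (K : X -> Prop) (f : X -> X -> R) (r : R) :
  (forall l : list X, exists x, K x /\ forall y, In y l -> r <= f y x) ->
  exists x : nat -> X, (forall n, K (x n)) /\ forall j n, (j < n)%nat -> r <= f (x j) (x n).
Proof.
  intros Hfar. destruct (functional_choice _ Hfar) as [h Hh].
  pose (prefix := nat_rect (fun _ => list X) nil (fun _ l => l ++ h l :: nil)).
  assert (Hin : forall n j, (j < n)%nat -> In (h (prefix j)) (prefix n)).
  { induction n as [|n IH]; intros j Hj; [lia|].
    cbn [prefix nat_rect]. apply in_or_app.
    destruct (Nat.eq_dec j n) as [->|Hne]; [right; left; reflexivity | left; apply IH; lia]. }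
  exists (fun n => h (prefix n)). split; [intro n; apply Hh|].
  intros j n Hjn. apply (proj2 (Hh (prefix n))), Hin, Hjn.
Qed.

End Subsequences.

Section Noncompactness.
Context {X : Type} (d : X -> X -> R).

Definition close_subseqs (K : X -> Prop) (r : R) : Prop :=
  forall y : nat -> X, (forall n, K (y n)) ->
    exists mu, strictly_incr mu /\ eventually2 (fun k l => d (y (mu k)) (y (mu l)) < r).

Definition finite_cover_lt (K : X -> Prop) (a : R) : Prop :=
  exists (n : nat) (F : nat -> X -> Prop),
    (forall i, (i < n)%nat -> Rbar_lt (diam d (F i)) a) /\
    (forall x, K x -> exists i, (i < n)%nat /\ F i x).

Lemma kuratowski_finite_cover (B : X -> Prop) :
  kuratowski d B = Glb_Rbar (fun delta => 0 < delta /\ finite_cover_lt B delta).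
Proof. reflexivity. Qed.

Lemma close_subseqs_mono (K K' : X -> Prop) (r r' : R) :
  subset K' K -> r <= r' -> close_subseqs K r -> close_subseqs K' r'.
Proof.
  intros HK Hr Hclose y Hy. destruct (Hclose y (fun n => HK _ (Hy n))) as [mu [Hmu Hev]].
  exists mu. split; [exact Hmu|].
  exact (eventually2_impl _ _ (fun k l H => Rlt_le_trans _ _ _ H Hr) Hev).
Qed.

Lemma finite_cover_mono (K K' : X -> Prop) (a a' : R) :
  subset K' K -> a <= a' -> finite_cover_lt K a -> finite_cover_lt K' a'.
Proof.
  intros HK Ha [n [F [HF Hcov]]]. exists n, F. split.
  - intros i Hi. apply Rbar_lt_le_trans with a; [apply HF, Hi | exact Ha].
  - intros x Hx. apply Hcov, HK, Hx.
Qed.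

Lemma diam_le (A : X -> Prop) (c : R) :
  (forall x y, A x -> A y -> d x y <= c) -> Rbar_le (diam d A) c.
Proof.
  intros Hc. apply (proj2 (Lub_Rbar_correct _)).
  intros s [x [y [Hx [Hy ->]]]]. apply Hc; assumption.
Qed.

Lemma dist_lt_of_diam_lt (A : X -> Prop) (a : R) (x y : X) :
  Rbar_lt (diam d A) a -> A x -> A y -> d x y < a.
Proof.
  intros Ha Hx Hy.
  apply (Rbar_le_lt_trans (d x y) (diam d A) a); [|exact Ha].
  apply (proj1 (Lub_Rbar_correct _)). exists x, y. auto.
Qed.

Lemma close_subseqs_of_finite_cover (K : X -> Prop) (a : R) :
  finite_cover_lt K a -> close_subseqs K a.
Proof.
  intros [n [F [HF Hcov]]] y Hy.
  destruct (functional_choice (fun k i => (i < n)%nat /\ F i (y k)) (fun k => Hcov _ (Hy k)))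
    as [c Hc].
  destruct (pigeonhole_subseq n c (fun k => proj1 (Hc k))) as [i [mu [Hi [Hmu Hci]]]].
  exists mu. split; [exact Hmu|]. exists O. intros k _. exists O. intros l _.
  apply (dist_lt_of_diam_lt (F i)); [apply HF, Hi | rewrite <- (Hci k) | rewrite <- (Hci l)];
    apply Hc.
Qed.

Lemma finite_cover_of_close_subseqs (K : X -> Prop) (r delta : R) :
  is_metric d -> 0 < r -> 2 * r < delta -> close_subseqs K r -> finite_cover_lt K delta.
Proof.
  intros [_ [_ [Hsym Htri]]] Hr Hdelta Hclose.
  set (r2 := (r + delta / 2) / 2).
  apply NNPP; intro Hnocover.
  assert (Hfar : forall l : list X, exists x, K x /\ forall y, In y l -> r2 <= d y x).
  { intro l. apply NNPP; intro Hnet. apply Hnocover.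
    exists (length l), (fun i z => exists y, nth_error l i = Some y /\ d y z < r2). split.
    - intros i _. apply Rbar_le_lt_trans with (2 * r2); [|simpl; unfold r2; lra].
      apply diam_le. intros x z [y [Hy Hx]] [y' [Hy' Hz]].
      rewrite Hy in Hy'. injection Hy' as <-.
      specialize (Htri x y z). rewrite (Hsym x y) in Htri. lra.
    - intros x Kx. apply NNPP; intro Hx. apply Hnet. exists x. split; [exact Kx|].
      intros y Hy. destruct (In_nth_error _ _ Hy) as [i Hi].
      apply Rnot_lt_le; intro Hlt. apply Hx. exists i.
      split; [apply nth_error_Some; congruence | exists y; auto]. }
  destruct (separated_seq K d r2 Hfar) as [x [HxK Hsep]].
  destruct (Hclose x HxK) as [mu [Hmu [N HN]]].
  destruct (HN N (le_n N)) as [M HM].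
  specialize (HM (Nat.max M (S N)) (Nat.le_max_l _ _)).
  specialize (Hsep (mu N) (mu (Nat.max M (S N)))
                (strictly_incr_lt mu Hmu N (Nat.max M (S N)) ltac:(lia))).
  unfold r2 in *. lra.
Qed.

Lemma kuratowski_le (B : X -> Prop) (c : R) :
  0 <= c -> (forall delta, c < delta -> finite_cover_lt B delta) ->
  Rbar_le (kuratowski d B) c.
Proof.
  intros Hc Hcov. rewrite kuratowski_finite_cover.
  set (E := fun delta => 0 < delta /\ finite_cover_lt B delta).
  generalize (Glb_Rbar_correct E). generalize (Glb_Rbar E). intros l [Hlb _].
  assert (HE : forall delta, c < delta -> E delta) by (intros delta Hd; split; [lra | auto]).
  destruct l as [l| |]; simpl; auto.
  - apply Rnot_lt_le; intro Hlt. specialize (Hlb ((l + c) / 2) (HE ((l + c) / 2) ltac:(lra))).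
    simpl in Hlb. lra.
  - exact (Hlb (c + 1) (HE (c + 1) ltac:(lra))).
Qed.

Lemma kuratowski_subset (A B : X -> Prop) :
  subset A B -> Rbar_le (kuratowski d A) (kuratowski d B).
Proof.
  intros HAB. rewrite !kuratowski_finite_cover.
  apply (proj2 (Glb_Rbar_correct _)). intros delta [Hdelta Hcov].
  apply (proj1 (Glb_Rbar_correct _)).
  split; [exact Hdelta | exact (finite_cover_mono B A delta delta HAB (Rle_refl _) Hcov)].
Qed.

Lemma kuratowski_bounded (B : X -> Prop) :
  is_metric d -> bounded_set d B ->
  exists a0, kuratowski d B = Finite a0 /\ 0 <= a0 /\
    forall a, a0 < a -> finite_cover_lt B a.
Proof.
  intros [_ [_ [Hsym Htri]]] [x0 [R0 HR0]].
  assert (Hcover : finite_cover_lt B (2 * Rabs R0 + 1)).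
  { exists 1%nat, (fun _ => B). split.
    - intros i _. apply Rbar_le_lt_trans with (2 * Rabs R0); [|simpl; lra].
      apply diam_le. intros x y Hx Hy.
      pose proof (HR0 x Hx). pose proof (HR0 y Hy). pose proof (Htri x x0 y).
      rewrite (Hsym x x0) in *. pose proof (Rle_abs R0). lra.
    - intros x Hx. exists O. split; [lia | exact Hx]. }
  rewrite kuratowski_finite_cover.
  set (E := fun delta => 0 < delta /\ finite_cover_lt B delta).
  generalize (Glb_Rbar_correct E). generalize (Glb_Rbar E). intros l [Hlb Hglb].
  assert (Hl0 : Rbar_le 0 l) by (apply Hglb; intros x [Hx _]; simpl; lra).
  assert (Hpos : 0 < 2 * Rabs R0 + 1) by (pose proof (Rabs_pos R0); lra).
  pose proof (Hlb _ (conj Hpos Hcover)) as Hl1.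
  destruct l as [a0| |]; simpl in Hl0, Hl1; try contradiction.
  exists a0. split; [reflexivity|]. split; [exact Hl0|].
  intros a Ha. apply NNPP; intro Hno.
  assert (Ha0 : Rbar_le a a0).
  { apply Hglb. intros delta [_ Hdelta]. simpl. apply Rnot_lt_le; intro Hlt.
    apply Hno, (finite_cover_mono B B delta a (fun x Hx => Hx) (Rlt_le _ _ Hlt) Hdelta). }
  simpl in Ha0. lra.
Qed.

End Noncompactness.

Section Contraction.
Context {X : Type} (d : X -> X -> R) (F : X -> X) (B0 : X -> Prop) (eta : R) (m : nat)
  (g : (nat -> R) -> R) (phi : X -> X -> R) (rho : nat -> X -> X -> R).

Hypothesis eta_ge0 : 0 <= eta.
Hypothesis eta_le1 : eta <= 1.
Hypothesis F_invariant : forall x, B0 x -> B0 (F x).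
Hypothesis g_cont0 : forall eps, 0 < eps -> exists delta, 0 < delta /\
  forall u, (forall i, (i < m)%nat -> 0 <= u i < delta) -> g u < eps.
Hypothesis phi_iterated_lim : forall y : nat -> X, (forall n, B0 (y n)) ->
  exists nu : nat -> nat, strictly_incr nu /\
    exists L : nat -> R,
      (forall k, is_lim_seq (fun l => phi (y (nu k)) (y (nu l))) (L k)) /\ is_lim_seq L 0.
Hypothesis rho_pseudometric : forall i, (i < m)%nat -> pseudometric_on B0 (rho i).
Hypothesis rho_precompact : forall i, (i < m)%nat -> forall y : nat -> X,
  (forall n, B0 (y n)) -> exists nu : nat -> nat, strictly_incr nu /\
    cauchy_seq (rho i) (fun k => y (nu k)).
Hypothesis F_contraction : forall y1 y2, B0 y1 -> B0 y2 ->
  d (F y1) (F y2) <= eta * d y1 y2 + g (fun i => rho i y1 y2) + phi y1 y2.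

Lemma phi_small_subseq (y : nat -> X) : (forall n, B0 (y n)) ->
  exists mu, strictly_incr mu /\
    forall e, 0 < e -> eventually2 (fun k l => phi (y (mu k)) (y (mu l)) < e).
Proof.
  intros Hy. destruct (phi_iterated_lim y Hy) as [mu [Hmu [L [HL HL0]]]].
  exists mu. split; [exact Hmu|]. intros e He.
  exact (eventually2_of_iterated_lim (fun k l => phi (y (mu k)) (y (mu l))) L e HL HL0 He).
Qed.

Lemma g_rho_small (z : nat -> X) (e : R) :
  (forall n, B0 (z n)) -> (forall i, (i < m)%nat -> cauchy_seq (rho i) z) -> 0 < e ->
  eventually2 (fun k l => g (fun i => rho i (z k) (z l)) < e).
Proof.
  intros Hz Hcauchy He. destruct (g_cont0 e He) as [delta [Hdelta Hg]].
  destruct (eventually_forall_lt (fun i N => forall k l, (N <= k)%nat -> (N <= l)%nat ->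
              rho i (z k) (z l) < delta) m) as [N HN].
  { intros i Hi. destruct (Hcauchy i Hi delta Hdelta) as [N HN].
    exists N. intros N' HN' k l Hk Hl. apply HN; lia. }
  exists N. intros k Hk. exists N. intros l Hl. apply Hg. intros i Hi. split.
  - apply (proj1 (rho_pseudometric i Hi)); apply Hz.
  - exact (HN i Hi N (le_n N) k l Hk Hl).
Qed.

Lemma close_subseqs_image (K : X -> Prop) (r e : R) :
  subset K B0 -> close_subseqs d K r -> 0 < e ->
  close_subseqs d (image F K) (eta * r + e).
Proof.
  intros HK Hclose He x Hx.
  destruct (functional_choice (fun n y => K y /\ x n = F y) Hx) as [y Hy].
  assert (HyB : forall n, B0 (y n)) by (intro n; apply HK, Hy).
  destruct (Hclose y (fun n => proj1 (Hy n))) as [mu1 [Hmu1 Hd]].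
  destruct (common_cauchy_subseq B0 rho m rho_precompact (fun k => y (mu1 k))
              (fun n => HyB _)) as [mu2 [Hmu2 Hcauchy]].
  destruct (phi_small_subseq (fun k => y (mu1 (mu2 k))) (fun n => HyB _)) as [mu3 [Hmu3 Hphi]].
  exists (fun k => mu1 (mu2 (mu3 k))).
  split; [exact (strictly_incr_comp _ _ Hmu1 (strictly_incr_comp _ _ Hmu2 Hmu3))|].
  assert (Hev := eventually2_and _ _
    (eventually2_and _ _
       (eventually2_subseq _ _ (strictly_incr_comp _ _ Hmu2 Hmu3) Hd)
       (eventually2_subseq _ _ Hmu3
          (g_rho_small _ (e / 2) (fun n => HyB _) Hcauchy ltac:(lra))))
    (Hphi (e / 2) ltac:(lra))).
  revert Hev. apply eventually2_impl. intros k l [[Hdkl Hgkl] Hphikl]. cbn beta in *.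
  rewrite (proj2 (Hy _)), (proj2 (Hy _)).
  pose proof (F_contraction _ _ (HyB (mu1 (mu2 (mu3 k)))) (HyB (mu1 (mu2 (mu3 l))))).
  assert (eta * d (y (mu1 (mu2 (mu3 k)))) (y (mu1 (mu2 (mu3 l)))) <= eta * r)
    by (apply Rmult_le_compat_l; lra).
  lra.
Qed.

Lemma close_subseqs_iter (n : nat) : forall (K : X -> Prop) (r e : R),
  subset K B0 -> close_subseqs d K r -> 0 < e ->
  close_subseqs d (image (Nat.iter n F) K) (eta ^ n * r + e).
Proof.
  induction n as [|n IH]; intros K r e HK Hclose He.
  - apply (close_subseqs_mono d K _ r); [|simpl; lra | exact Hclose].
    intros x [y [Hy ->]]. exact Hy.
  - assert (HiterK : subset (image (Nat.iter n F) K) B0).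
    { intros x [y [Hy ->]]. clear IH.
      induction n as [|n IHn]; [apply HK, Hy | apply F_invariant, IHn]. }
    apply (close_subseqs_mono d (image F (image (Nat.iter n F) K)) _
             (eta * (eta ^ n * r + e / 2) + e / 2)).
    + intros x [y [Hy ->]]. exists (Nat.iter n F y). split; [exists y; auto | reflexivity].
    + simpl. assert (eta * (e / 2) <= e / 2) by nra. nra.
    + apply close_subseqs_image; [exact HiterK | apply IH; auto; lra | lra].
Qed.

Lemma kuratowski_iter_le (a0 : R) (n : nat) (K : X -> Prop) :
  is_metric d -> 0 <= a0 -> (forall a, a0 < a -> finite_cover_lt d B0 a) -> subset K B0 ->
  Rbar_le (kuratowski d (image (Nat.iter n F) K)) (2 * eta ^ n * a0).
Proof.
  intros Hmet Ha0 Hcov HK.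
  set (q := eta ^ n). assert (Hq : 0 <= q) by (apply pow_le; exact eta_ge0).
  apply kuratowski_le; [nra|]. intros delta Hdelta.
  set (ep := (delta - 2 * q * a0) / (4 * (q + 1))).
  assert (Hep : 0 < ep) by (apply Rdiv_lt_0_compat; lra).
  assert (Hep_eq : ep * (q + 1) = (delta - 2 * q * a0) / 4) by (unfold ep; field; lra).
  apply (finite_cover_of_close_subseqs d _ (q * (a0 + ep) + ep)); [exact Hmet | nra | nra |].
  apply close_subseqs_iter; [exact HK | | exact Hep].
  apply (close_subseqs_mono d B0 K (a0 + ep)); [exact HK | apply Rle_refl |].
  apply close_subseqs_of_finite_cover, Hcov. lra.
Qed.

End Contraction.

Lemma nat_between (x : R) : 0 <= x -> exists n : nat, x <= INR n <= x + 1.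
Proof. intros Hx. destruct (nfloor_ex x Hx) as [n Hn]. exists (S n). rewrite S_INR. lra. Qed.

Lemma pow_le_rpow (a e : R) (n : nat) : 0 <= a <= 1 -> 0 <= e <= INR n -> a ^ n <= rpow a e.
Proof.
  intros [Ha0 Ha1] [He0 Hen]. unfold rpow. destruct (Rlt_dec 0 a) as [Hpos|Hnpos].
  - rewrite <- (Rpower_pow n a Hpos). unfold Rpower.
    assert (Hln : ln a <= 0) by (rewrite <- ln_1; apply ln_le; lra).
    assert (Hle : INR n * ln a <= e * ln a) by nra.
    destruct (Rle_lt_or_eq_dec _ _ Hle) as [Hlt|Heq].
    + left. apply exp_increasing, Hlt.
    + rewrite Heq. apply Rle_refl.
  - replace a with 0 by lra. destruct n as [|n]; [simpl in *; destruct (Req_EM_T e 0); lra|].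
    rewrite pow_i by lia. destruct (Req_EM_T e 0); lra.
Qed.

Lemma rpow_exponential_bound (a T c : R) : 0 <= a < 1 -> 0 < T -> 0 <= c ->
  exists t0 C beta, 0 < t0 /\ 0 < C /\ 0 < beta /\
    forall t, t0 <= t -> 2 * rpow a ((t - T) / T) * c <= C * exp (- beta * t).
Proof.
  intros [Ha0 Ha1] HT Hc. unfold rpow. destruct (Rlt_dec 0 a) as [Hpos|Hnpos].
  - assert (Hln : ln a < 0) by (rewrite <- ln_1; apply ln_increasing; lra).
    exists T, (2 * c / a + 1), (- ln a / T).
    split; [lra|]. split; [assert (0 <= 2 * c / a) by (apply Rdiv_le_0_compat; lra); lra|].
    split; [apply Rdiv_lt_0_compat; lra|].
    intros t Ht. unfold Rpower.
    replace ((t - T) / T * ln a) with (- (- ln a / T) * t + - ln a) by (field; lra).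
    rewrite exp_plus, exp_Ropp, exp_ln by exact Hpos.
    set (E := exp (- (- ln a / T) * t)). assert (0 < E) by apply exp_pos.
    replace (2 * (E * / a) * c) with (2 * c / a * E) by (field; lra). nra.
  - exists (2 * T), 1, 1. split; [lra|]. split; [lra|]. split; [lra|].
    intros t Ht. pose proof (exp_pos (- (1) * t)).
    destruct (Req_EM_T ((t - T) / T) 0) as [Hz|Hz]; [|lra].
    exfalso. assert (Hge : 1 <= (t - T) / T)
      by (apply (Rmult_le_reg_r T); [lra | unfold Rdiv; rewrite Rmult_assoc, Rinv_l; lra]).
    lra.
Qed.

Lemma semigroup_iter {X : Type} (d : X -> X -> R) (S : R -> X -> X) (T : R) :
  is_semigroup d S -> 0 <= T ->
  forall n x, S (INR n * T) x = Nat.iter n (S T) x.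
Proof.
  intros [_ [HS0 HSadd]] HT n x. induction n as [|n IH].
  - simpl. rewrite Rmult_0_l. apply HS0.
  - change (Nat.iter (Datatypes.S n) (S T) x) with (S T (Nat.iter n (S T) x)).
    rewrite <- IH, S_INR.
    replace ((INR n + 1) * T) with (T + INR n * T) by ring.
    apply HSadd; [lra | apply Rmult_le_pos; [apply pos_INR | lra]].
Qed.

Section SemigroupDecay.
Context {X : Type} (d : X -> X -> R) (S : R -> X -> X) (B0 : X -> Prop) (T eta : R)
  (m : nat) (g : (nat -> R) -> R) (phi : X -> X -> R) (rho : nat -> X -> X -> R).

Hypothesis d_metric : is_metric d.
Hypothesis S_semigroup : is_semigroup d S.
Hypothesis B0_bounded : bounded_set d B0.
Hypothesis B0_invariant : pos_invariant S B0.
Hypothesis T_pos : 0 < T.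
Hypothesis eta_ge0 : 0 <= eta.
Hypothesis eta_lt1 : eta < 1.
Hypothesis g_cont0 : forall eps, 0 < eps -> exists delta, 0 < delta /\
  forall u, (forall i, (i < m)%nat -> 0 <= u i < delta) -> g u < eps.
Hypothesis phi_iterated_lim : forall y : nat -> X, (forall n, B0 (y n)) ->
  exists nu : nat -> nat, strictly_incr nu /\
    exists L : nat -> R,
      (forall k, is_lim_seq (fun l => phi (y (nu k)) (y (nu l))) (L k)) /\ is_lim_seq L 0.
Hypothesis rho_pseudometric : forall i, (i < m)%nat -> pseudometric_on B0 (rho i).
Hypothesis rho_precompact : forall i, (i < m)%nat -> forall y : nat -> X,
  (forall n, B0 (y n)) -> exists nu : nat -> nat, strictly_incr nu /\
    cauchy_seq (rho i) (fun k => y (nu k)).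
Hypothesis ST_contraction : forall y1 y2, B0 y1 -> B0 y2 ->
  d (S T y1) (S T y2) <= eta * d y1 y2 + g (fun i => rho i y1 y2) + phi y1 y2.

Lemma kuratowski_semigroup_le (B : X -> Prop) (tstar t : R) :
  0 <= tstar -> (forall s, tstar <= s -> subset (image (S s) B) B0) -> tstar + T <= t ->
  Rbar_le (kuratowski d (image (S t) B))
          (Rbar_mult (2 * rpow eta ((t - tstar - T) / T)) (kuratowski d B0)).
Proof.
  intros Htstar Habs Ht.
  destruct (kuratowski_bounded d B0 d_metric B0_bounded) as [a0 [Hk0 [Ha0 Hcov]]].
  set (e := (t - tstar - T) / T).
  assert (He : 0 <= e) by (apply Rdiv_le_0_compat; lra).
  destruct (nat_between e He) as [n [Hen Hne]].
  assert (HnT : INR n * T <= t - tstar).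
  { replace (t - tstar) with ((e + 1) * T) by (unfold e; field; lra).
    apply Rmult_le_compat_r; lra. }
  set (s := t - INR n * T).
  assert (Hsplit : subset (image (S t) B) (image (Nat.iter n (S T)) (image (S s) B))).
  { intros x [y [Hy ->]]. exists (S s y). split; [exists y; auto|].
    rewrite <- (semigroup_iter d S T S_semigroup (Rlt_le _ _ T_pos)).
    replace t with (INR n * T + s) at 1 by (unfold s; ring).
    apply (proj2 (proj2 S_semigroup)); [|unfold s; lra].
    apply Rmult_le_pos; [apply pos_INR | lra]. }
  eapply Rbar_le_trans; [apply (kuratowski_subset d _ _ Hsplit)|].
  assert (HST : forall x, B0 x -> B0 (S T x)).
  { intros x Hx. apply (B0_invariant T (Rlt_le _ _ T_pos)). exists x. auto. }
  eapply Rbar_le_trans.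
  { apply (kuratowski_iter_le d (S T) B0 eta m g phi rho eta_ge0 (Rlt_le _ _ eta_lt1) HST
             g_cont0 phi_iterated_lim rho_pseudometric rho_precompact ST_contraction a0 n);
      [exact d_metric | exact Ha0 | exact Hcov | apply Habs; unfold s; lra]. }
  rewrite Hk0. simpl.
  assert (eta ^ n <= rpow eta e) by (apply pow_le_rpow; lra).
  nra.
Qed.

End SemigroupDecay.

Theorem theorem4p7 (X : Type) (d : X -> X -> R) (S : R -> X -> X) (B0 : X -> Prop)
  (T eta : R) (m : nat) (g : (nat -> R) -> R) (phi : X -> X -> R)
  (rho : nat -> X -> X -> R) :
  is_metric d -> complete_metric d -> is_semigroup d S -> dissipative d S ->
  bounded_set d B0 -> absorbing d S B0 -> pos_invariant S B0 ->
  0 < T -> 0 <= eta -> eta < 1 ->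
  (* g : (R^+)^m -> R^+ *)
  (forall u, (forall i, (i < m)%nat -> 0 <= u i) -> 0 <= g u) ->
  (* (i) *)
  (forall u v, (forall i, (i < m)%nat -> 0 <= u i /\ u i <= v i) -> g u <= g v) ->
  g (fun _ => 0) = 0 ->
  (forall eps, 0 < eps -> exists delta, 0 < delta /\
     forall u, (forall i, (i < m)%nat -> 0 <= u i < delta) -> g u < eps) ->
  (* phi : X x X -> R^+ *)
  (forall x y, 0 <= phi x y) ->
  (* (ii) *)
  (forall y : nat -> X, (forall n, B0 (y n)) ->
     exists nu : nat -> nat, strictly_incr nu /\
       exists L : nat -> R,
         (forall k, is_lim_seq (fun l => phi (y (nu k)) (y (nu l))) (L k)) /\
         is_lim_seq L 0) ->
  (* (iii) *)
  (forall i, (i < m)%nat -> pseudometric_on B0 (rho i)) ->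
  (forall i, (i < m)%nat -> forall y : nat -> X, (forall n, B0 (y n)) ->
     exists nu : nat -> nat, strictly_incr nu /\ cauchy_seq (rho i) (fun k => y (nu k))) ->
  (* (iv) *)
  (forall y1 y2, B0 y1 -> B0 y2 ->
     d (S T y1) (S T y2) <= eta * d y1 y2 + g (fun i => rho i y1 y2) + phi y1 y2) ->
  exp_decaying d S B0 /\
  (forall B, bounded_set d B -> forall tstar, 0 <= tstar ->
     (forall t, tstar <= t -> subset (image (S t) B) B0) ->
     forall t, tstar + T <= t ->
       Rbar_le (kuratowski d (image (S t) B))
               (Rbar_mult (2 * rpow eta ((t - tstar - T) / T)) (kuratowski d B0))).
Proof.
  intros Hmet _ Hsg Hdiss Hbd Habs Hpinv HT Heta0 Heta1 _ _ _ Hgcont _ Hphi Hrho Hrhoc Hiv.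
  pose proof (kuratowski_semigroup_le d S B0 T eta m g phi rho Hmet Hsg Hbd Hpinv HT
                Heta0 Heta1 Hgcont Hphi Hrho Hrhoc Hiv) as Hbound.
  split; [|intros B _ tstar Hts Hsub t Ht; exact (Hbound B tstar t Hts Hsub Ht)].
  repeat (split; [assumption|]).
  destruct (kuratowski_bounded d B0 Hmet Hbd) as [a0 [Hk0 [Ha0 _]]].
  destruct (rpow_exponential_bound eta T a0 (conj Heta0 Heta1) HT Ha0)
    as [t0 [C [beta [Ht0 [HC [Hbeta Hdecay]]]]]].
  exists (Rmax t0 T), C, beta.
  split; [apply Rlt_le_trans with t0; [exact Ht0 | apply Rmax_l]|]. split; [exact HC|].
  split; [exact Hbeta|].
  intros t Ht. pose proof (Rmax_l t0 T). pose proof (Rmax_r t0 T).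
  eapply Rbar_le_trans; [apply (Hbound B0 0 t (Rle_refl 0) Hpinv); lra|].
  rewrite Hk0, Rminus_0_r. apply Hdecay. lra.
Qed.
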